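(* Let $\mathcal{T}$ be a tangle of order $k$ in a connectivity system $(E,\lambda)$. Let $X$ be a $\mathcal{T}$-strong $k$-separating set, and let $(X_i)_{i=1}^m$ be a partial $k$-sequence for $X$. Then $\mathrm{fcl}_{\mathcal{T}}(X)=X\cup \bigcup_{i=1}^m X_i$ if and only if $(X_i)_{i=1}^m$ is maximal.
   Context: A connectivity system is a pair $(E,\lambda)$ with $E$ finite and $\lambda$ an integer-valued symmetric submodular function on subsets of $E$. $X$ is $k$-separating if $\lambda(X)\le k$. A tangle of order $k$ is a collection $\mathcal T$ of subsets of $E$ with (T1) $\lambda(A)<k$ for $A\in\mathcal T$; (T2) if $\lambda(A)\le k-1$ then $A\in\mathcal T$ or $E-A\in\mathcal T$; (T3) $A\cup B\cup C\ne E$ for $A,B,C\in\mathcal T$; (T4) $E-\{e\}\notin\mathcal T$ for $e\in E$. A set is $\mathcal T$-weak if contained in a member of $\mathcal T$, and $\mathcal T$-strong otherwise. A $\mathcal T$-strong $k$-separating set $X$ is fully closed if $X\cup Y$ is not $k$-separating for every nonempty $\mathcal T$-weak $Y\subseteq E-X$; $\mathrm{fcl}_{\mathcal T}(X)$ is the intersection of all fully closed $k$-separating sets containing $X$. A partial $k$-sequence for $X$ is a sequence $(X_i)_{i=1}^m$ of pairwise disjoint nonempty $\mathcal T$-weak subsets of $E-X$ such that $X\cup\bigcup_{i=1}^jX_i$ is $k$-separating for all $j\le m$. It is maximal if $X\cup\bigcup_{i=1}^m X_i$ is maximal under inclusion among all sets of the form $X\cup\bigcup_{i=1}^{n}Y_i$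 with $(Y_i)_{i=1}^n$ a partial $k$-sequence for $X$. *)

From mathcomp Require Import all_boot all_order all_algebra.
Set Implicit Arguments. Unset Strict Implicit. Unset Printing Implicit Defensive.
Import Order.TTheory GRing.Theory Num.Theory.
Local Open Scope ring_scope.

Definition connectivity_system (E : finType) (lambda : {set E} -> int) : Prop :=
  (forall A : {set E}, lambda (~: A) = lambda A) /\
  (forall A B : {set E}, lambda (A :|: B) + lambda (A :&: B) <= lambda A + lambda B).

Definition kseparating (E : finType) (lambda : {set E} -> int) (k : int) (X : {set E}) : Prop :=
  lambda X <= k.

Definition tangle (E : finType) (lambda : {set E} -> int) (k : int) (T : {set {set E}}) : Prop :=
  [/\ (forall A, A \in T -> lambda A < k),
      (forall A, lambda A <= k - 1 -> A \in T \/ ~: A \in T),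
      (forall A B C, A \in T -> B \in T -> C \in T -> A :|: B :|: C != setT)
    & (forall e : E, ~: [set e] \notin T)].

Definition weak (E : finType) (T : {set {set E}}) (Y : {set E}) : bool :=
  [exists A in T, Y \subset A].

Definition strong (E : finType) (T : {set {set E}}) (Y : {set E}) : bool :=
  ~~ weak T Y.

Definition fully_closed (E : finType) (lambda : {set E} -> int) (k : int)
  (T : {set {set E}}) (X : {set E}) : bool :=
  [&& strong T X, lambda X <= k &
      [forall Y : {set E}, [&& Y != set0, weak T Y & Y \subset ~: X] ==>
        ~~ (lambda (X :|: Y) <= k)]].

(* fcl_T(X): intersection of all fully closed k-separating sets containing X
   (the intersection of the empty family is E). *)
Definition fcl (E : finType) (lambda : {set E} -> int) (k : int)
  (T : {set {set E}}) (X : {set E}) : {set E} :=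
  \bigcap_(Y : {set E} | fully_closed lambda k T Y && (X \subset Y)) Y.

Definition seq_union (E : finType) (s : seq {set E}) : {set E} :=
  \bigcup_(Y <- s) Y.

Definition partial_kseq (E : finType) (lambda : {set E} -> int) (k : int)
  (T : {set {set E}}) (X : {set E}) (s : seq {set E}) : Prop :=
  [/\ (forall i j, (i < j < size s)%N -> [disjoint nth set0 s i & nth set0 s j]),
      (forall Y, Y \in s -> [/\ Y != set0, weak T Y & Y \subset ~: X])
    & (forall j, (j <= size s)%N -> kseparating lambda k (X :|: seq_union (take j s)))].

Definition maximal_kseq (E : finType) (lambda : {set E} -> int) (k : int)
  (T : {set {set E}}) (X : {set E}) (s : seq {set E}) : Prop :=
  forall t : seq {set E}, partial_kseq lambda k T X t ->
    ~ ((X :|: seq_union s) \proper (X :|: seq_union t)).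

(* Every partial k-sequence for X stays inside each fully closed set Y containing X:
   if adding the next weak piece to get a k-separating set Z escaped Y, then lambda (Y :|: Z) > k, so by
   submodularity Y :&: Z is (k-1)-separating; the tangle cannot contain Y :&: Z
   (it contains the strong set X), so it contains its complement, making ~: Y weak,
   and then Y :|: ~: Y = setT would be k-separating, contradicting full closure.
   Hence X :|: seq_union s lies in fcl X for every partial k-sequence s.
   Conversely, a maximal sequence cannot be extended by any nonempty weak W, which
   says precisely that X :|: seq_union s is fully closed, so it contains fcl X. *)

From mathcomp Require Import all_boot all_order all_algebra.
From mathcomp Require Import zify.
Set Implicit Arguments. Unset Strict Implicit.
Import Order.TTheory GRing.Theory Num.Theory.
Local Open Scope ring_scope.

Lemma weak_subset (E : finType) (T : {set {set E}}) (A B : {set E}) :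
  B \subset A -> weak T A -> weak T B.
Proof.
move=> BA /existsP [C /andP [CT AC]]; apply/existsP; exists C.
by rewrite CT (subset_trans BA AC).
Qed.

Lemma seq_union_rcons (E : finType) (s : seq {set E}) (W : {set E}) :
  seq_union (rcons s W) = seq_union s :|: W.
Proof. by rewrite /seq_union -cats1 big_cat big_seq1. Qed.

Lemma seq_union_take_nth (E : finType) (s : seq {set E}) (j : nat) :
  (j < size s)%N -> seq_union (take j.+1 s) = seq_union (take j s) :|: nth set0 s j.
Proof. by move=> lt_j; rewrite (take_nth set0 lt_j) seq_union_rcons. Qed.

Lemma sub_seq_union (E : finType) (s : seq {set E}) (Y : {set E}) :
  Y \in s -> Y \subset seq_union s.
Proof. by move=> Ys; rewrite /seq_union (big_rem Y Ys) subsetUl. Qed.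

Section FullClosure.

Variables (E : finType) (lambda : {set E} -> int) (k : int) (T : {set {set E}}).
Hypothesis lambda_cs : connectivity_system lambda.
Hypothesis T_tangle : tangle lambda k T.

Lemma connectivity_set0_min (A : {set E}) : lambda set0 <= lambda A.
Proof.
have [sym submod] := lambda_cs.
have := submod A (~: A); rewrite setUCr setICr -setC0 !sym; lia.
Qed.

Lemma fully_closed_compl_strong (Y : {set E}) :
  fully_closed lambda k T Y -> ~: Y != set0 -> strong T (~: Y).
Proof.
move=> /and3P [_ lY /forallP closedY] nY; apply/negP => wY.
have := closedY (~: Y); rewrite nY wY subxx setUCr /= => /negP; apply.
by rewrite -setC0 lambda_cs.1 (le_trans (connectivity_set0_min Y)).
Qed.

Lemma fully_closed_absorbs (X Y Z : {set E}) :
  strong T X -> fully_closed lambda k T Y -> X \subset Y -> X \subset Z ->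
  lambda Z <= k -> weak T (Z :\: Y) -> Z \subset Y.
Proof.
move=> sX fY XY XZ lZ wW; have /and3P [_ lY /forallP closedY] := fY.
rewrite -setD_eq0; apply/negPn/negP => W0.
have lYZ : ~ (lambda (Y :|: Z) <= k).
  have := closedY (Z :\: Y); rewrite W0 wW subDset setUCr subsetT /=.
  by rewrite setDE setUIr setUCr setIT => /negP.
have lYIZ : lambda (Y :&: Z) <= k - 1 by have := lambda_cs.2 Y Z; lia.
have [_ T_sep _ _] := T_tangle.
have [YIZ_T | YIZC_T] := T_sep _ lYIZ.
  by move/negP: sX; apply; apply/existsP; exists (Y :&: Z); rewrite YIZ_T subsetI XY XZ.
have nY : ~: Y != set0.
  by apply: contraNneq W0 => Y_full; rewrite setDE Y_full setI0.
move/negP: (fully_closed_compl_strong fY nY); apply.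
apply: weak_subset (_ : ~: Y \subset ~: (Y :&: Z)) _; first by rewrite setCS subsetIl.
by apply/existsP; exists (~: (Y :&: Z)); rewrite YIZC_T subxx.
Qed.

Lemma partial_kseq_sub_fully_closed (X Y : {set E}) (s : seq {set E}) :
  strong T X -> partial_kseq lambda k T X s ->
  fully_closed lambda k T Y -> X \subset Y -> X :|: seq_union s \subset Y.
Proof.
move=> sX [_ pieces_s sep_s] fY XY.
suff take_sub j : (j <= size s)%N -> X :|: seq_union (take j s) \subset Y.
  by have := take_sub _ (leqnn _); rewrite take_size.
elim: j => [|j IHj] le_j; first by rewrite take0 /seq_union big_nil setU0.
apply: (fully_closed_absorbs sX fY XY (subsetUl _ _) (sep_s _ le_j)).
have [_ w_j _] := pieces_s _ (mem_nth set0 le_j).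
apply: weak_subset w_j.
rewrite seq_union_take_nth // setUA setDE setIUl.
have /eqP -> : (X :|: seq_union (take j s)) :&: ~: Y == set0.
  by rewrite -setDE setD_eq0 IHj // ltnW.
by rewrite set0U subsetIl.
Qed.

Lemma partial_kseq_sub_fcl (X : {set E}) (s : seq {set E}) :
  strong T X -> partial_kseq lambda k T X s -> X :|: seq_union s \subset fcl lambda k T X.
Proof.
move=> sX ps; apply/bigcapsP => Y /andP [fY XY].
exact: partial_kseq_sub_fully_closed ps fY XY.
Qed.

End FullClosure.

Lemma partial_kseq_rcons (E : finType) (lambda : {set E} -> int) (k : int)
    (T : {set {set E}}) (X W : {set E}) (s : seq {set E}) :
  partial_kseq lambda k T X s -> W != set0 -> weak T W ->
  W \subset ~: (X :|: seq_union s) -> lambda (X :|: seq_union s :|: W) <= k ->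
  partial_kseq lambda k T X (rcons s W).
Proof.
move=> [disj_s pieces_s sep_s] W0 wW WC lW; split.
- move=> i j; rewrite size_rcons => /andP [lt_ij le_j].
  have lt_i : (i < size s)%N by rewrite (leq_trans lt_ij).
  rewrite !nth_rcons lt_i; move: le_j; rewrite ltnS leq_eqVlt => /predU1P [-> | lt_j].
    rewrite ltnn eqxx disjoint_sym disjoints_subset (subset_trans WC) // setCS.
    by rewrite (subset_trans (sub_seq_union (mem_nth set0 lt_i))) ?subsetUr.
  by rewrite lt_j; apply: disj_s; rewrite lt_ij.
- move=> Y; rewrite mem_rcons inE => /predU1P [-> | /pieces_s //].
  by rewrite W0 wW (subset_trans WC) // setCS subsetUl.
- move=> j; rewrite size_rcons leq_eqVlt ltnS => /predU1P [-> | le_j].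
    by rewrite take_oversize ?size_rcons // seq_union_rcons setUA.
  by rewrite -cats1 takel_cat //; exact: sep_s.
Qed.

Lemma maximal_kseq_fully_closed (E : finType) (lambda : {set E} -> int) (k : int)
    (T : {set {set E}}) (X : {set E}) (s : seq {set E}) :
  strong T X -> partial_kseq lambda k T X s -> maximal_kseq lambda k T X s ->
  fully_closed lambda k T (X :|: seq_union s).
Proof.
move=> sX ps max_s; have [_ _ sep_s] := ps.
apply/and3P; split.
- by apply: contra sX; apply: weak_subset; rewrite subsetUl.
- by have := sep_s _ (leqnn _); rewrite take_size.
apply/forallP => W; apply/implyP => /and3P [W0 wW WC]; apply/negP => lW.
apply: (max_s _ (partial_kseq_rcons ps W0 wW WC lW)).
rewrite seq_union_rcons setUA; apply: properUl; apply: contra W0 => WZ.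
by rewrite -subset0 -(setICr (X :|: seq_union s)) subsetI WZ WC.
Qed.

(* The hypothesis that X is k-separating is the case j = 0 of partial_kseq. *)
Theorem lemma3p6 (E : finType) (lambda : {set E} -> int) (k : int)
  (T : {set {set E}}) (X : {set E}) (s : seq {set E}) :
  connectivity_system lambda ->
  tangle lambda k T ->
  strong T X -> kseparating lambda k X ->
  partial_kseq lambda k T X s ->
  (fcl lambda k T X = X :|: seq_union s <-> maximal_kseq lambda k T X s).
Proof.
move=> cs tg sX _ ps; split.
  move=> fcl_eq t pt; rewrite properE -fcl_eq.
  by rewrite (partial_kseq_sub_fcl cs tg sX pt) andbF.
move=> max_s; apply/eqP; rewrite eqEsubset (partial_kseq_sub_fcl cs tg sX ps) andbT.
by apply: bigcap_inf; rewrite (maximal_kseq_fully_closed sX ps max_s) subsetUl.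
Qed.
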